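(* Let $A=(a_{ij})\in M_n(\mathbb{C})$ and suppose the Schur map $S_A\colon M_n(\mathbb{C})\to M_n(\mathbb{C})$, $S_A(B)=A\circ B$, is unital, i.e. $S_A(I)=I$. Then the following are equivalent: (i) $S_A$ is multiplicative and $*$-preserving (i.e. $S_A(BC)=S_A(B)S_A(C)$ and $S_A(B^* )=S_A(B)^*$ for all $B,C$); (ii) $S_A$ is a completely positive algebra isomorphism of $M_n(\mathbb{C})$; (iii) $A$ has rank one, is normal, and has all diagonal entries equal to $1$; (iv) $A$ has rank one, all entries of $A$ have modulus $1$, and all diagonal entries equal $1$; (v) $A$ is self-adjoint, $\mathrm{Spec}(A)=\{0,n\}$ with the eigenvalue $0$ of multiplicity $n-1$, and $\|S_A\|=1$; (vi) $A$ has no zero entries, and both $A$ and $A^{[-1]}$ are positive matrices with all diagonal entries equal to $1$.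
   Context: $A\circ B=(a_{ij}b_{ij})$ is the entrywise (Schur) product. A positive matrix means a Hermitian matrix with nonnegative spectrum. For a matrix with no zero entries, $A^{[-1]}=(1/a_{ij})$. $\|S_A\|$ is the operator norm of the linear map $S_A$ when $M_n(\mathbb{C})$ carries the operator norm. A map $\Phi$ on $M_n(\mathbb{C})$ is completely positive if $\mathrm{Id}_{M_k}\otimes\Phi$ is positive for every $k$. $\mathrm{Spec}$ denotes the set of eigenvalues. *)

(* The complex field is modelled by an arbitrary
   numClosedFieldType C (e.g. C = R[i] for a real closed field R),
   following mathcomp's spectral.v. *)
From HB Require Import structures.
From mathcomp Require Import all_boot all_order all_algebra.
From mathcomp Require Import sesquilinear spectral.
Set Implicit Arguments. Unset Strict Implicit. Unset Printing Implicit Defensive.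
Import Order.TTheory GRing.Theory Num.Theory.
Local Open Scope ring_scope.
Local Open Scope sesquilinear_scope.

Section Defs.
Context {C : numClosedFieldType}.

Definition schur {n : nat} (A B : 'M[C]_n) : 'M[C]_n :=
  \matrix_(i, j) (A i j * B i j).

Definition adjmx {n : nat} (B : 'M[C]_n) : 'M[C]_n := B ^t*.

Definition psdmx {m : nat} (M : 'M[C]_m) : Prop :=
  M ^t* = M /\ forall a : C, eigenvalue M a -> 0 <= a.

(* Id_{M_k} (x) Phi, acting on M_k(M_n(C)) = M_{kn}(C), block by block *)
Definition ampl {n : nat} (k : nat) (Phi : 'M[C]_n -> 'M[C]_n)
  (X : 'I_k -> 'I_k -> 'M[C]_n) : 'M[C]_(\sum_(i < k) n) :=
  \mxblock_(i < k, j < k) Phi (X i j).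

Definition blockmx {n : nat} (k : nat) (X : 'I_k -> 'I_k -> 'M[C]_n)
  : 'M[C]_(\sum_(i < k) n) := \mxblock_(i < k, j < k) X i j.

Definition completely_positive {n : nat} (Phi : 'M[C]_n -> 'M[C]_n) : Prop :=
  forall (k : nat) (X : 'I_k -> 'I_k -> 'M[C]_n),
    psdmx (blockmx X) -> psdmx (ampl Phi X).

Definition algebra_iso {n : nat} (Phi : 'M[C]_n -> 'M[C]_n) : Prop :=
  [/\ forall (a : C) (B D : 'M[C]_n), Phi (a *: B + D) = a *: Phi B + Phi D,
      forall B D : 'M[C]_n, Phi (B *m D) = Phi B *m Phi D,
      Phi 1%:M = 1%:M
    & bijective Phi].

Definition vnorm2 {n : nat} (x : 'cV[C]_n) : C := \sum_i `|x i 0| ^+ 2.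

(* ||B|| <= c for the operator norm (c >= 0), written out *)
Definition opnorm_le {n : nat} (B : 'M[C]_n) (c : C) : Prop :=
  forall x : 'cV[C]_n, vnorm2 (B *m x) <= c ^+ 2 * vnorm2 x.

(* ||S_A|| = 1 where ||S_A|| = sup { ||A o B|| : ||B|| <= 1 } *)
Definition schur_norm_eq1 {n : nat} (A : 'M[C]_n) : Prop :=
  (forall B : 'M[C]_n, opnorm_le B 1 -> opnorm_le (schur A B) 1) /\
  (forall k : C, 0 <= k < 1 ->
     exists B : 'M[C]_n, opnorm_le B 1 /\ ~ opnorm_le (schur A B) k).

Definition entry_inv {n : nat} (A : 'M[C]_n) : 'M[C]_n :=
  \matrix_(i, j) (A i j)^-1.

End Defs.

(* All six conditions are equivalent, under S_A(I) = I, to A being a Hermitian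
   cocycle: A_ij A_jk = A_ik and A_ji = conj A_ij, i.e. A = x x^* for a vector x
   with unimodular entries x_i = A_i0.  For such A one has S_A(B) = D B D^* with
   D = diag(x) unitary, which yields (i), (ii) and (v); (iii), (iv) and (vi) are
   direct.  Conversely, S_A evaluated on matrix units gives the cocycle identity
   in (i) and (ii); a rank-one factorisation A = u v^T with unit diagonal gives it
   in (iii) and (iv), where normality forces |A_ij| = 1; in (v), A^2 = n A and
   |A_ij| <= 1 make each sum (A^2)_ij = n A_ij an equality case of the triangle
   inequality; in (vi), positivity of A and of A^[-1] bounds |A_ij| from both
   sides, and positivity of a unimodular matrix forces the cocycle identity. *)

From HB Require Import structures.
From mathcomp Require Import all_boot all_order all_algebra.
From mathcomp Require Import sesquilinear spectral.
From mathcomp Require Import ring.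
Import Order.TTheory GRing.Theory Num.Theory Num.Def.
Local Open Scope ring_scope.
Local Open Scope sesquilinear_scope.

Section Adjoint.
Context {C : numClosedFieldType}.

Lemma trmxC_mul {m n p} (X : 'M[C]_(m, n)) (Y : 'M[C]_(n, p)) :
  (X *m Y) ^t* = Y ^t* *m X ^t*.
Proof. by rewrite trmx_mul map_mxM. Qed.

Lemma hermitian_entry {n} {M : 'M[C]_n} i j : M ^t* = M -> M j i = (M i j)^*.
Proof. by move=> M_herm; rewrite -[in LHS]M_herm !mxE. Qed.

Lemma trmxC_mul_eq0 {m n} (Y : 'M[C]_(m, n)) : Y ^t* *m Y = 0 -> Y = 0.
Proof.
move=> YtY0; apply/matrixP => i j.
have /eqP : \sum_k Y k j * (Y k j)^* = 0.
  move/matrixP/(_ j j): YtY0; rewrite !mxE; apply: etrans.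
  by apply: eq_bigr => k _; rewrite !mxE mulrC.
rewrite psumr_eq0 => [/allP/(_ i (mem_index_enum _))|k _]; last exact: mul_conjC_ge0.
by rewrite mul_conjC_eq0 mxE => /eqP.
Qed.

Lemma hermitian_exp {n} {M : 'M[C]_n} k : M ^t* = M -> (M ^+ k) ^t* = M ^+ k.
Proof.
move=> M_herm; elim: k => [|k IH]; first by rewrite !expr0 trmx1 map_mx1.
by rewrite exprS -mulmxE trmxC_mul mulmxE IH M_herm -exprSr exprS.
Qed.

(* [(M^k N)^* (M^k N) = N M^(2k) N] vanishes once [M^(k+1) N] does. *)
Lemma hermitian_expr_mul_eq0 {n} {M N : 'M[C]_n} k :
  M ^t* = M -> N ^t* = N -> M ^+ k.+1 * N = 0 -> M * N = 0.
Proof.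
move=> M_herm N_herm; elim: k => [|k IH] MkN0; first by rewrite expr1 in MkN0.
apply: IH; apply: trmxC_mul_eq0.
rewrite trmxC_mul hermitian_exp // N_herm mulmxE.
by rewrite {1}exprSr -!mulrA (mulrA M) -exprS MkN0 !mulr0.
Qed.

End Adjoint.

Lemma normC_eq1 {C : numClosedFieldType} (x : C) : (`|x| == 1) = (x * x^* == 1).
Proof. by rewrite -sqrp_eq1 // normCK. Qed.

Lemma conjC_norm1 {C : numClosedFieldType} {x : C} : `|x| = 1 -> x^* = x^-1.
Proof. by move=> x1; rewrite invC_norm x1 expr1n invr1 mul1r. Qed.

Lemma norm1_neq0 {C : numClosedFieldType} {x : C} : `|x| = 1 -> x != 0.
Proof. by move=> x1; rewrite -normr_eq0 x1 oner_eq0. Qed.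

Section PositiveMatrices.
Context {C : numClosedFieldType} {m : nat} {M : 'M[C]_m}.

Lemma psdmx_form_ge0 (y : 'rV_m) : psdmx M -> 0 <= form conjC M y y.
Proof.
move=> [M_herm M_ev].
have /orthomx_spectralP : M \is normalmx by apply/normalmxP; rewrite M_herm.
have P_unitary := spectral_unitarymx M.
rewrite invmx_unitary //; set P := spectralmx M; set d := spectral_diag M => M_eq.
have PPt : P *m P ^t* = 1%:M by apply/unitarymxP.
have d_ge0 k : 0 <= d 0 k.
  apply: M_ev; apply/eigenvalueP; exists (row k P).
    rewrite {1}M_eq !mulmxA -row_mul PPt -row_mul mul1mx row_diag_mx.
    by rewrite -scalemxAl -rowE.
  apply/eqP => Pk0; have : row k (P *m P ^t* ) = 0 by rewrite row_mul Pk0 mul0mx.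
  by rewrite PPt row1 => /matrixP/(_ 0 k)/eqP; rewrite !mxE !eqxx oner_eq0.
set z := y *m P ^t*.
have -> : form conjC M y y = (z *m diag_mx d *m z ^t*) 0 0.
  by rewrite /form M_eq /z trmxC_mul trmxCK !mulmxA.
rewrite mxE; apply: sumr_ge0 => k _; rewrite mul_mx_diag !mxE.
by rewrite mulrAC mulr_ge0 ?mul_conjC_ge0.
Qed.

Hypotheses (M_psd : psdmx M) (M_diag1 : forall i, M i i = 1).

Lemma psdmx_entry_le1 i j : `|M i j| <= 1.
Proof.
have [->|ij] := eqVneq i j; first by rewrite M_diag1 normr1.
rewrite -(@expr_le1 _ 2) // normCK -subr_ge0.
have -> : 1 - M i j * (M i j)^* = form conjC M ('e_i - M i j *: 'e_j) ('e_i - M i j *: 'e_j).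
  rewrite !(formDl, formDr, formNl, formNr, formZl, formZr, formee) !M_diag1.
  by rewrite (hermitian_entry i j M_psd.1); ring.
exact: psdmx_form_ge0.
Qed.

(* The form at [2 e_i - M_ij e_j - M_ik e_k] equals [- |w - 1|^2] with
   [w = M_ij M_jk / M_ik]. *)
Lemma psdmx_norm1_cocycle : (forall i j, `|M i j| = 1) ->
  forall i j k, M i j * M j k = M i k.
Proof.
move=> M_norm1 i j k.
have M_conj p q : M q p = (M p q)^-1.
  by rewrite (hermitian_entry p q M_psd.1) conjC_norm1.
have [<-|nij] := eqVneq i j; first by rewrite M_diag1 mul1r.
have [<-|njk] := eqVneq j k; first by rewrite M_diag1 mulr1.
have [<-|nik] := eqVneq i k; first by rewrite (M_conj i j) M_diag1 mulfV ?norm1_neq0.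
set a := M i j; set b := M j k; set c := M i k.
have [a0 b0 c0] : [/\ a != 0, b != 0 & c != 0] by split; apply/norm1_neq0/M_norm1.
set w := a * b / c.
have wC : w^* = w^-1.
  by rewrite /w !rmorphM /= fmorphV /= !conjC_norm1 ?M_norm1 //; field; rewrite a0 b0 c0.
suff /eqP : (w - 1) * (w - 1)^* = 0.
  by rewrite mul_conjC_eq0 subr_eq0 => /eqP /divr1_eq.
apply/eqP; rewrite eq_le mul_conjC_ge0 andbT -oppr_ge0.
set x : 'rV_m := 2%:R *: 'e_i - a *: 'e_j - c *: 'e_k.
have -> : - ((w - 1) * (w - 1)^* ) = form conjC M x x.
  rewrite !(formDl, formDr, formNl, formNr, formZl, formZr, formee) !M_diag1.
  rewrite (M_conj i j) (M_conj j k) (M_conj i k) -/a -/b -/c.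
  have aC : a^* = a^-1 := conjC_norm1 (M_norm1 i j).
  have cC : c^* = c^-1 := conjC_norm1 (M_norm1 i k).
  rewrite /= aC cC conjC_nat rmorphB rmorph1 /= wC /w.
  by field; rewrite a0 b0 c0.
exact: psdmx_form_ge0.
Qed.

End PositiveMatrices.

Definition hermitian_cocycle {C : numClosedFieldType} {m} (A : 'M[C]_m) : Prop :=
  (forall i j k, A i j * A j k = A i k) /\ (forall i j, A j i = (A i j)^*).

Section Cocycle.
Context {C : numClosedFieldType} {m : nat} {A : 'M[C]_m}.
Hypotheses (A_diag1 : forall i, A i i = 1) (A_cocycle : hermitian_cocycle A).

Lemma cocycle_norm1 i j : `|A i j| = 1.
Proof.
have [A_mul A_conj] := A_cocycle.
by apply/eqP; rewrite normC_eq1 -A_conj A_mul A_diag1.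
Qed.

Lemma cocycle_neq0 i j : A i j != 0.
Proof. exact/norm1_neq0/cocycle_norm1. Qed.

Lemma cocycle_hermitian : A ^t* = A.
Proof. by apply/matrixP => i j; rewrite !mxE -A_cocycle.2. Qed.

Lemma entry_inv_cocycle : entry_inv A = A^T.
Proof.
by apply/matrixP => i j; rewrite !mxE (A_cocycle.2 i j) (conjC_norm1 (cocycle_norm1 i j)).
Qed.

Lemma trmx_cocycle : hermitian_cocycle A^T.
Proof.
have [A_mul A_conj] := A_cocycle.
by split=> [i j k|i j]; rewrite !mxE ?(A_conj j i) // mulrC A_mul.
Qed.

(* For [v A = a v] with [v_j != 0], the cocycle identity gives [a v_k = s A_jk]
   where [s = (v A)_j]; multiplying by [A_kj] and summing gives [s a = m s], so
   [a] is [0] or [m]. *)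
Lemma cocycle_psdmx : psdmx A.
Proof.
have [A_mul A_conj] := A_cocycle.
split; first exact: cocycle_hermitian.
move=> a /eigenvalueP [v vA v0].
have [j vj0] : exists j, v 0 j != 0.
  apply/existsP; apply: contraNT v0 => /existsPn v_eq0.
  by apply/eqP/matrixP => p q; rewrite ord1 mxE; apply/eqP/negPn/v_eq0.
pose s := \sum_i v 0 i * A i j.
have av k : a * v 0 k = s * A j k.
  move/matrixP/(_ 0 k): vA; rewrite !mxE => <-.
  by rewrite mulr_suml; apply: eq_bigr => i _; rewrite -mulrA A_mul.
have sa : s * a = s * m%:R.
  rewrite -[m in RHS]card_ord -sumr_const mulr_sumr mulrC /s mulr_sumr.
  by apply: eq_bigr => i _; rewrite mulrA av -mulrA A_mul A_diag1 !mulr1.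
have [s0|s0] := eqVneq s 0.
  move: (av j); rewrite s0 mul0r => /eqP.
  by rewrite mulf_eq0 (negbTE vj0) orbF => /eqP ->.
by rewrite (mulfI s0 sa) ler0n.
Qed.

End Cocycle.

Section BlockDiagonal.
Context {C : numClosedFieldType}.

Lemma trmxC_mxblock {p} {q_ : 'I_p -> nat} (B : forall i j, 'M[C]_(q_ i, q_ j)) :
  (\mxblock_(i, j) B i j) ^t* = \mxblock_(i, j) (B j i) ^t*.
Proof. by apply/matrixP => i j; rewrite !mxE. Qed.

Lemma trmxC_mxdiag {k m} (D : 'M[C]_m) :
  (\mxdiag_(i < k) D) ^t* = \mxdiag_(i < k) D ^t*.
Proof.
rewrite trmxC_mxblock; apply: eq_mxblock => i j.
by rewrite eq_sym; case: (i == j); rewrite ?conform_mx_id // trmx0 map_mx0.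
Qed.

Lemma mxdiag_mul {k m} (D1 D2 : 'M[C]_m) :
  \mxdiag_(i < k) D1 *m \mxdiag_(i < k) D2 = \mxdiag_(i < k) (D1 *m D2).
Proof.
rewrite [X in _ *m X]/mxdiag mul_mxdiag_mxblock /mxdiag; apply: eq_mxblock => i j.
by case: (i == j); rewrite ?conform_mx_id ?mulmx0.
Qed.

Lemma mxdiag_unitary {k m} (D : 'M[C]_m) :
  D \is unitarymx -> \mxdiag_(i < k) D \is unitarymx.
Proof.
move/unitarymxP=> DDt; apply/unitarymxP.
by rewrite trmxC_mxdiag mxdiag_mul DDt mxdiagZ.
Qed.

End BlockDiagonal.

Lemma psdmx_unitary_conj {C : numClosedFieldType} {m} (U M : 'M[C]_m) :
  U \is unitarymx -> psdmx M -> psdmx (U *m M *m U ^t*).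
Proof.
move=> U_unitary [M_herm M_ev]; split; first by rewrite !trmxC_mul trmxCK M_herm mulmxA.
move=> a /eigenvalueP [v vUMU v0]; apply: M_ev; apply/eigenvalueP; exists (v *m U).
  rewrite !mulmxA in vUMU.
  by rewrite -[v *m U *m M](mulmxKtV _ U_unitary) // vUMU -scalemxAl.
apply: contra v0 => /eqP vU0; apply/eqP.
by rewrite -(mulmxtVK v U_unitary) vU0 mul0mx.
Qed.

Section VectorNorm.
Context {C : numClosedFieldType} {m : nat}.

Lemma mulmx_delta_col (i j : 'I_m) (x : 'cV[C]_m) :
  delta_mx i j *m x = x j 0 *: delta_mx i 0.
Proof.
apply/matrixP => p q; rewrite ord1 !mxE (bigD1 j) //= big1 => [|k kj].
  by rewrite !mxE eqxx andbT addr0 mulrC.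
by rewrite !mxE (negbTE kj) andbF mul0r.
Qed.

Lemma vnorm2_delta (a : C) (i : 'I_m) : vnorm2 (a *: delta_mx i 0 : 'cV_m) = `|a| ^+ 2.
Proof.
rewrite /vnorm2 (bigD1 i) //= big1 => [|p pi]; first by rewrite !mxE !eqxx mulr1 addr0.
by rewrite !mxE (negbTE pi) mulr0 normr0 expr0n.
Qed.

Lemma vnorm2_diag_norm1 (d : 'rV[C]_m) (x : 'cV_m) :
  (forall i, `|d 0 i| = 1) -> vnorm2 (diag_mx d *m x) = vnorm2 x.
Proof.
move=> d_norm1; apply: eq_bigr => i _.
by rewrite mul_diag_mx !mxE normrM d_norm1 mul1r.
Qed.

Lemma opnorm_le_delta (i j : 'I_m) : opnorm_le (delta_mx i j : 'M[C]_m) 1.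
Proof.
move=> x; rewrite mulmx_delta_col vnorm2_delta expr1n mul1r /vnorm2 (bigD1 j) //=.
by rewrite lerDl sumr_ge0 // => k _; rewrite exprn_ge0.
Qed.

Lemma opnorm_le1_diag_conj (d : 'rV[C]_m) (B : 'M_m) : (forall i, `|d 0 i| = 1) ->
  opnorm_le B 1 -> opnorm_le (diag_mx d *m B *m (diag_mx d) ^t*) 1.
Proof.
move=> d_norm1 B_le1 x; rewrite -!mulmxA vnorm2_diag_norm1 //.
have dC_norm1 i : `|(d ^ conjC) 0 i| = 1 by rewrite mxE norm_conjC.
rewrite tr_diag_mx map_diag_mx -[vnorm2 x](vnorm2_diag_norm1 _ x dC_norm1).
exact: B_le1.
Qed.

End VectorNorm.

(* Equality in the triangle inequality: the mean of points of the unit disc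
   lies on the unit circle only if they all coincide. *)
Lemma sum_norm_le1_eq {C : numClosedFieldType} {N} {a : 'I_N -> C} {c : C} :
  (forall k, `|a k| <= 1) -> `|c| = 1 -> \sum_k a k = N%:R * c -> forall k, a k = c.
Proof.
move=> a_le1 c_norm1 sum_a k.
have ac_le1 l : `|a l * c^*| <= 1 by rewrite normrM norm_conjC c_norm1 mulr1.
have sum_ac : \sum_l a l * c^* = \sum_(l < N) 1.
  by rewrite -mulr_suml sum_a -mulrA -normCK c_norm1 expr1n mulr1 sumr_const card_ord.
have := normC_sum_upper (fun l _ => ac_le1 l) sum_ac (i := k) isT.
by rewrite (conjC_norm1 c_norm1) => /divr1_eq.
Qed.

Lemma rank1_entry_factor {F : fieldType} {m n} (A : 'M[F]_(m, n)) : \rank A = 1%N ->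
  exists u v, forall i j, A i j = u i * v j.
Proof.
move=> rkA; have := mulmx_base A; move: (col_base A) (row_base A).
rewrite rkA => cb rb eqA; exists (fun i => cb i 0), (fun j => rb 0 j).
by move=> i j; rewrite -eqA mxE big_ord1.
Qed.

(* Factor [[1, v], [u, x I]] through each of its two Schur complements. *)
Lemma det_scalar_sub_rank1 {R : comNzRingType} {N}
    (u : 'cV[R]_N) (v : 'rV[R]_N) (x : R) :
  \det (x%:M - u *m v) * x = (x - (v *m u) 0 0) * x ^+ N.
Proof.
pose M := block_mx (1%:M : 'M_1) v u (x%:M : 'M_N).
have M_lu : M = block_mx 1%:M 0 u 1%:M *m block_mx 1%:M v 0 (x%:M - u *m v).
  by rewrite mulmx_block !mul1mx !mulmx1 ?mul0mx ?mulmx0 ?addr0 ?add0r addrC subrK.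
have M_ru :
    M *m block_mx (x%:M : 'M_1) 0 (- u) 1%:M = block_mx (x%:M - v *m u) v 0 x%:M.
  rewrite mulmx_block !mul1mx !mulmx1 ?mul0mx ?mulmx0 ?addr0 ?add0r.
  by rewrite mul_mx_scalar mul_scalar_mx mulmxN scalerN addrN.
move/(congr1 determinant): M_ru.
rewrite det_mulmx det_lblock det_ublock det_scalar1 det1 mulr1 M_lu det_mulmx.
by rewrite det_lblock det_ublock !det1 !mul1r det_mx11 !mxE eqxx mulr1n det_scalar.
Qed.

Lemma hermitian_char_poly_mul_eq0 {C : numClosedFieldType} {n}
    {M : 'M[C]_n.+1} {c : C} {k} :
  M ^t* = M -> c^* = c -> char_poly M = 'X ^+ k * ('X - c%:P) -> M * (M - c%:M) = 0.
Proof.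
move=> M_herm c_real chM.
have MkMc : M ^+ k * (M - c%:M) = 0.
  have := Cayley_Hamilton M.
  by rewrite chM rmorphM rmorphXn rmorphB /= horner_mx_X horner_mx_C.
apply: (hermitian_expr_mul_eq0 k M_herm); last by rewrite exprS -mulrA MkMc mulr0.
by rewrite linearB /= map_mxB M_herm tr_scalar_mx map_scalar_mx /= c_real.
Qed.

Section SchurMap.
Context {C : numClosedFieldType} {m : nat}.
Implicit Types (A B : 'M[C]_m).

Lemma schur_delta A i j : schur A (delta_mx i j) = A i j *: delta_mx i j.
Proof.
apply/matrixP => p q; rewrite !mxE.
by case: (eqVneq p i) => [->|]; case: (eqVneq q j) => [->|] //=; rewrite ?mulr0 ?mulr1.
Qed.

Lemma schur_unital_diag A : schur A 1%:M = 1%:M <-> forall i, A i i = 1.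
Proof.
split=> [A1 i|A_diag1].
  by move/matrixP/(_ i i): A1; rewrite !mxE eqxx mulr1.
apply/matrixP => i j; rewrite !mxE.
by case: (eqVneq i j) => [->|] /=; rewrite ?A_diag1 ?mulr1 ?mulr0.
Qed.

Lemma schur_const1 A : schur A (const_mx 1) = A.
Proof. by apply/matrixP => i j; rewrite !mxE mulr1. Qed.

Lemma schur_multiplicative_cocycle A :
  (forall B D, schur A (B *m D) = schur A B *m schur A D) ->
  forall i j k, A i j * A j k = A i k.
Proof.
move=> S_mul i j k; move/matrixP/(_ i k): (S_mul (delta_mx i j) (delta_mx j k)).
rewrite mul_delta_mx !schur_delta -scalemxAl -scalemxAr mul_delta_mx scalerA.
by rewrite !mxE !eqxx /= !mulr1.
Qed.

Lemma schur_mul_adj_cocycle A :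
  (forall B D, schur A (B *m D) = schur A B *m schur A D) /\
  (forall B, schur A (adjmx B) = adjmx (schur A B)) -> hermitian_cocycle A.
Proof.
move=> [S_mul S_adj]; split=> [|i j]; first exact: schur_multiplicative_cocycle.
have delta_adj : adjmx (delta_mx j i) = delta_mx i j :> 'M[C]_m.
  by apply/matrixP => p q; rewrite !mxE conjC_nat andbC.
move/matrixP/(_ i j): (S_adj (delta_mx j i)).
by rewrite delta_adj !schur_delta !mxE !eqxx /= !mulr1 => ->; rewrite conjCK.
Qed.

Lemma const1_cocycle k : hermitian_cocycle (const_mx 1 : 'M[C]_k).
Proof. by split=> *; rewrite !mxE ?mulr1 ?conjC1. Qed.

Lemma schur_cp_iso_cocycle A :
  completely_positive (schur A) /\ algebra_iso (schur A) -> hermitian_cocycle A.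
Proof.
move=> [S_cp [_ S_mul _ _]]; split; first exact: schur_multiplicative_cocycle.
have const1_psd k : psdmx (const_mx 1 : 'M[C]_k).
  by apply: (cocycle_psdmx _ (const1_cocycle k)) => i; rewrite mxE.
have := S_cp 1%N (fun _ _ => const_mx 1).
rewrite /blockmx /ampl mxblock_const schur_const1 => /(_ (const1_psd _)) [+ _].
rewrite trmxC_mxblock => /(congr1 (fun X => submxblock X ord0 ord0)).
by rewrite !mxblockK => A_herm i j; apply: hermitian_entry.
Qed.

End SchurMap.

Section CocycleSchurMap.
Context {C : numClosedFieldType} {n : nat} {A : 'M[C]_n.+1}.
Hypotheses (A_diag1 : forall i, A i i = 1) (A_cocycle : hermitian_cocycle A).

Lemma cocycle_factor : A = (\col_i A i 0) *m (\row_j A 0 j).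
Proof. by apply/matrixP => i j; rewrite !mxE big_ord1 !mxE A_cocycle.1. Qed.

Lemma cocycle_rank1 : \rank A = 1%N.
Proof.
apply/eqP; rewrite eqn_leq; apply/andP; split.
  by rewrite cocycle_factor (leq_trans (mxrankM_maxl _ _)) ?rank_leq_col.
rewrite lt0n mxrank_eq0; apply/eqP => A0.
by move: (A_diag1 0); rewrite A0 mxE => /eqP; rewrite eq_sym oner_eq0.
Qed.

Lemma cocycle_char_poly : char_poly A = 'X ^+ n * ('X - (n.+1%:R)%:P).
Proof.
have trace_A : ((\row_j A 0 j) *m (\col_i A i 0)) 0 0 = n.+1%:R.
  rewrite mxE (eq_bigr (fun _ => 1)) ?sumr_const ?card_ord // => k _.
  by rewrite !mxE A_cocycle.1 A_diag1.
apply: (@mulIf _ 'X); first by rewrite polyX_eq0.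
rewrite /char_poly /char_poly_mx cocycle_factor map_mxM det_scalar_sub_rank1 -map_mxM.
by rewrite mxE trace_A exprS; ring.
Qed.

Let D := diag_mx (\row_i A i 0).

Lemma cocycle_diag_unitary : D \is unitarymx.
Proof.
apply/unitarymxP/matrixP => i j; rewrite tr_diag_mx map_diag_mx mul_mx_diag !mxE.
have [->|ij] := eqVneq i j; last by rewrite mulr0n mul0r.
by rewrite mulr1n -normCK cocycle_norm1 ?expr1n.
Qed.

Lemma cocycle_schurE B : schur A B = D *m B *m D ^t*.
Proof.
apply/matrixP => i j; rewrite tr_diag_mx map_diag_mx mul_mx_diag mul_diag_mx !mxE.
by rewrite /= -(A_cocycle.2 j 0) -(A_cocycle.1 i 0 j); ring.
Qed.

Lemma cocycle_schur_mul_adj :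
  (forall B1 B2, schur A (B1 *m B2) = schur A B1 *m schur A B2) /\
  (forall B, schur A (adjmx B) = adjmx (schur A B)).
Proof.
split=> [B1 B2|B]; rewrite !cocycle_schurE.
  by rewrite !mulmxA (mulmxKtV _ cocycle_diag_unitary).
by rewrite /adjmx !trmxC_mul trmxCK mulmxA.
Qed.

Lemma cocycle_schur_cp : completely_positive (schur A).
Proof.
move=> k X X_psd; have -> : ampl (schur A) X =
    \mxdiag_(i < k) D *m blockmx X *m (\mxdiag_(i < k) D) ^t*.
  rewrite trmxC_mxdiag /ampl /blockmx mul_mxdiag_mxblock mul_mxblock_mxdiag.
  by apply: eq_mxblock => i j; rewrite cocycle_schurE.
exact/psdmx_unitary_conj/X_psd/mxdiag_unitary/cocycle_diag_unitary.
Qed.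

Lemma cocycle_schur_algebra_iso : algebra_iso (schur A).
Proof.
split.
- by move=> a B1 B2; apply/matrixP => i j; rewrite !mxE; ring.
- exact: cocycle_schur_mul_adj.1.
- exact/schur_unital_diag.
- exists (schur (entry_inv A)) => B; apply/matrixP => i j; rewrite !mxE mulrA.
    by rewrite mulVf ?mul1r ?cocycle_neq0.
  by rewrite mulfV ?mul1r ?cocycle_neq0.
Qed.

Lemma cocycle_schur_norm_eq1 : schur_norm_eq1 A.
Proof.
split=> [B B_le1|k /andP [k_ge0 k_lt1]].
  rewrite cocycle_schurE; apply: opnorm_le1_diag_conj => // i.
  by rewrite mxE cocycle_norm1.
exists 1%:M; split=> [x|]; first by rewrite mul1mx expr1n mul1r.
move/(_ (delta_mx 0 0)); rewrite (schur_unital_diag _).2 // mul1mx.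
rewrite -[delta_mx _ _]scale1r vnorm2_delta normr1 expr1n mulr1.
have k2_lt1 : k ^+ 2 < 1 by rewrite exprn_ilt1.
by move=> /(lt_le_trans k2_lt1); rewrite ltxx.
Qed.

Lemma cocycle_schur_cp_iso : completely_positive (schur A) /\ algebra_iso (schur A).
Proof. by split; [exact: cocycle_schur_cp | exact: cocycle_schur_algebra_iso]. Qed.

Lemma cocycle_rank1_normal : [/\ \rank A = 1%N, A \is normalmx & forall i, A i i = 1].
Proof.
by split; [exact: cocycle_rank1 | apply/normalmxP; rewrite cocycle_hermitian | exact: A_diag1].
Qed.

Lemma cocycle_rank1_norm1 :
  [/\ \rank A = 1%N, forall i j, `|A i j| = 1 & forall i, A i i = 1].
Proof. by split; [exact: cocycle_rank1 | exact: cocycle_norm1 | exact: A_diag1]. Qed.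

Lemma cocycle_hermitian_spectrum :
  [/\ adjmx A = A, char_poly A = 'X ^+ n * ('X - (n.+1%:R)%:P) & schur_norm_eq1 A].
Proof.
by split; [exact: cocycle_hermitian | exact: cocycle_char_poly | exact: cocycle_schur_norm_eq1].
Qed.

Lemma cocycle_psdmx_entry_inv :
  [/\ forall i j, A i j != 0, psdmx A /\ (forall i, A i i = 1)
     & psdmx (entry_inv A) /\ (forall i, entry_inv A i i = 1)].
Proof.
split; [exact: cocycle_neq0 | exact: (conj (cocycle_psdmx A_diag1 A_cocycle) A_diag1) |].
rewrite (entry_inv_cocycle A_diag1 A_cocycle); split=> [|i]; last by rewrite mxE.
by apply: cocycle_psdmx (trmx_cocycle A_cocycle) => i; rewrite mxE.
Qed.

End CocycleSchurMap.

Lemma schur_contraction_entry_le1 {C : numClosedFieldType} {m} {A : 'M[C]_m} :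
  (forall B, opnorm_le B 1 -> opnorm_le (schur A B) 1) -> forall i j, `|A i j| <= 1.
Proof.
move=> S_contr i j; have := S_contr _ (opnorm_le_delta i j) (delta_mx j 0).
rewrite schur_delta -scalemxAl mulmx_delta_col mxE eqxx /= scalerA mulr1.
by rewrite -[delta_mx j 0]scale1r !vnorm2_delta normr1 !expr1n mul1r expr_le1.
Qed.

Section UnitDiagonal.
Context {C : numClosedFieldType} {n : nat} {A : 'M[C]_n.+1}.
Hypothesis A_diag1 : forall i, A i i = 1.

Lemma rank1_diag1_cocycle : \rank A = 1%N -> forall i j k, A i j * A j k = A i k.
Proof.
move=> /rank1_entry_factor [u [v uv]] i j k.
by move: (A_diag1 j); rewrite !uv => uv_jj; rewrite -[RHS]mulr1 -uv_jj; ring.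
Qed.

Lemma norm1_hermitian_cocycle : (forall i j k, A i j * A j k = A i k) ->
  (forall i j, `|A i j| = 1) -> hermitian_cocycle A.
Proof.
move=> A_mul A_norm1; split=> // i j.
apply: (mulIf (norm1_neq0 (A_norm1 i j))).
by rewrite A_mul A_diag1 (conjC_norm1 (A_norm1 i j)) mulVf ?norm1_neq0.
Qed.

(* With [A = u v^T], the diagonals of [A A^*] and [A^* A] are
   [|u_i|^2 sum_k |v_k|^2] and [|v_i|^2 sum_k |u_k|^2], while [|u_i v_i| = 1]. *)
Lemma rank1_normal_norm1 : \rank A = 1%N -> A \is normalmx -> forall i j, `|A i j| = 1.
Proof.
move=> /rank1_entry_factor [u [v uv]] /normalmxP A_normal.
pose p i := u i * (u i)^*; pose q i := v i * (v i)^*.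
have p_ge0 i : 0 <= p i by apply: mul_conjC_ge0.
have q_ge0 i : 0 <= q i by apply: mul_conjC_ge0.
have pq1 i : p i * q i = 1.
  by move: (A_diag1 i); rewrite uv /p /q mulrACA -rmorphM => ->; rewrite rmorph1 mulr1.
pose Su := \sum_k p k; pose Sv := \sum_k q k.
have pSv i : p i * Sv = q i * Su.
  move/matrixP/(_ i i): A_normal; rewrite !mxE => AA_ii.
  transitivity (\sum_k A i k * (A ^t*) k i).
    rewrite mulr_sumr; apply: eq_bigr => k _.
    by rewrite !mxE !uv rmorphM /= /p /q; ring.
  rewrite AA_ii mulr_sumr; apply: eq_bigr => k _.
  by rewrite !mxE !uv rmorphM /= /p /q; ring.
have Sv_neq0 : Sv != 0.
  apply/eqP => /(psumr_eq0P (fun k _ => q_ge0 k)) q0.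
  by move: (pq1 0); rewrite q0 // mulr0 => /eqP; rewrite eq_sym oner_eq0.
have p_const i j : p i = p j.
  have p2Sv k : p k ^+ 2 * Sv = Su by rewrite expr2 -mulrA pSv mulrA pq1 mul1r.
  by apply/eqP; rewrite -(@eqrXn2 _ 2) // -(inj_eq (mulIf Sv_neq0)) !p2Sv.
move=> i j; apply/eqP; rewrite normC_eq1 uv rmorphM /= mulrACA.
by rewrite -/(p i) -/(q j) (p_const i j) pq1.
Qed.

Lemma hermitian_spectrum_cocycle :
  [/\ adjmx A = A, char_poly A = 'X ^+ n * ('X - (n.+1%:R)%:P) & schur_norm_eq1 A] ->
  hermitian_cocycle A.
Proof.
case=> A_herm chA [S_contr _].
have A_le1 := schur_contraction_entry_le1 S_contr.
have A2 i j : \sum_k A i k * A k j = n.+1%:R * A i j.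
  move/eqP: (hermitian_char_poly_mul_eq0 A_herm (conjC_nat _ _) chA).
  rewrite mulrBr subr_eq0 -mulmxE mul_mx_scalar => /eqP/matrixP/(_ i j).
  by rewrite !mxE.
have A_norm1 i j : `|A i j| = 1.
  have A_le1' k : `|A i k * A k i| <= 1 by rewrite normrM mulr_ile1.
  have := sum_norm_le1_eq A_le1' (normr1 C); rewrite A2 A_diag1 => /(_ erefl j).
  by rewrite (hermitian_entry i j A_herm) => /eqP; rewrite -normC_eq1 => /eqP.
apply: norm1_hermitian_cocycle => // i j k.
apply: (sum_norm_le1_eq (a := fun l => A i l * A l k)) (A2 i k) _ => [l|].
  by rewrite normrM !A_norm1 mulr1.
exact: A_norm1.
Qed.

End UnitDiagonal.

Section BundledConditions.
Context {C : numClosedFieldType} {n : nat} {A : 'M[C]_n.+1}.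

Lemma rank1_norm1_cocycle :
  [/\ \rank A = 1%N, forall i j, `|A i j| = 1 & forall i, A i i = 1] -> hermitian_cocycle A.
Proof.
case=> rkA A_norm1 A_diag1.
exact: norm1_hermitian_cocycle (rank1_diag1_cocycle _ rkA) A_norm1.
Qed.

Lemma rank1_normal_cocycle :
  [/\ \rank A = 1%N, A \is normalmx & forall i, A i i = 1] -> hermitian_cocycle A.
Proof.
case=> rkA A_normal A_diag1; apply: rank1_norm1_cocycle.
by split=> //; apply: rank1_normal_norm1.
Qed.

Lemma psdmx_entry_inv_cocycle :
  [/\ forall i j, A i j != 0, psdmx A /\ (forall i, A i i = 1)
     & psdmx (entry_inv A) /\ (forall i, entry_inv A i i = 1)] -> hermitian_cocycle A.
Proof.
case=> A_neq0 [A_psd A_diag1] [Ainv_psd Ainv_diag1].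
have A_norm1 i j : `|A i j| = 1.
  apply/le_anti; rewrite psdmx_entry_le1 //=.
  by move: (psdmx_entry_le1 Ainv_psd Ainv_diag1 i j); rewrite mxE normfV invf_le1 // normr_gt0 A_neq0.
split; first exact: psdmx_norm1_cocycle.
by move=> i j; apply: hermitian_entry A_psd.1.
Qed.

End BundledConditions.

Theorem theorem2p4 (C : numClosedFieldType) (n : nat) (A : 'M[C]_n) :
  (0 < n)%N ->
  schur A 1%:M = 1%:M ->
  [<->
    (* (i) *)
    (forall B D : 'M[C]_n, schur A (B *m D) = schur A B *m schur A D) /\
    (forall B : 'M[C]_n, schur A (adjmx B) = adjmx (schur A B));
    (* (ii) *)
    completely_positive (schur A) /\ algebra_iso (schur A);
    (* (iii) *)
    [/\ \rank A = 1%N, A \is normalmx & forall i, A i i = 1];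
    (* (iv) *)
    [/\ \rank A = 1%N, forall i j, `|A i j| = 1 & forall i, A i i = 1];
    (* (v) *)
    [/\ adjmx A = A,
        char_poly A = 'X ^+ n.-1 * ('X - (n%:R)%:P)
      & schur_norm_eq1 A];
    (* (vi) *)
    [/\ forall i j, A i j != 0,
        psdmx A /\ (forall i, A i i = 1)
      & psdmx (entry_inv A) /\ (forall i, entry_inv A i i = 1)]
  ].
Proof.
case: n A => [//|n] A _ /schur_unital_diag A_diag1.
tfae.
- by move/schur_mul_adj_cocycle; exact: cocycle_schur_cp_iso.
- by move/schur_cp_iso_cocycle; exact: cocycle_rank1_normal.
- by move/rank1_normal_cocycle; exact: cocycle_rank1_norm1.
- by move/rank1_norm1_cocycle; exact: cocycle_hermitian_spectrum.
- by move/(hermitian_spectrum_cocycle A_diag1); exact: cocycle_psdmx_entry_inv.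
- by move/psdmx_entry_inv_cocycle; exact: cocycle_schur_mul_adj.
Qed.
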